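(* Let $f:\mathbb{R}^d\to\mathbb{R}$ be twice continuously differentiable with $\nabla f$ Lipschitz continuous with constant $\kappa_{Lg}>0$. Fix $\bm{x}_0\in\mathbb{R}^d$, $\Delta>0$, the coordinate design set $\bm{x}^0=\bm{x}_0$, $\bm{x}^i=\bm{x}_0+\Delta\bm{e}^i$, $\bm{x}^{i+d}=\bm{x}_0-\Delta\bm{e}^i$ ($i=1,\dots,d$), arbitrary reals $\bar E^0,\dots,\bar E^{2d}$, and $\bar F^i=f(\bm{x}^i)+\bar E^i$. Let $M(\bm{x}_0+\bm{s})=\beta_0+\bm{s}^\top\bm{G}+\frac12\bm{s}^\top\mathsf{H}\bm{s}$ with $\mathsf{H}$ diagonal be the quadratic model with diagonal Hessian interpolating $M(\bm{x}^i)=\bar F^i$, $i=0,\dots,2d$, and suppose $\|\mathsf{H}\|\le\kappa_{\mathsf{H}}$. Then for every $\bm{x}\in\mathcal{B}(\bm{x}_0;\Delta)$, $$|M(\bm{x})-f(\bm{x})|\le\kappa_{ef}\Delta^2+|\bar E^0|+\sum_{i=1}^{2d}|\bar E^i-\bar E^0|,$$ where $\kappa_{ef}=\kappa_{eg1}+\frac{\kappa_{Lg}+\kappa_{\mathsf{H}}}{2}$ and $\kappa_{eg1}=\frac{5\sqrt{2d}}{2}(\kappa_{Lg}+\kappa_{\mathsf{H}})$.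
   Context: $\bm{e}^i$ is the $i$-th standard unit basis vector; $\mathcal{B}(\bm{x}_0;\Delta)$ is the closed Euclidean ball of radius $\Delta$ centered at $\bm{x}_0$; $\|\mathsf{H}\|$ is the spectral norm. *)

From mathcomp Require Import all_boot all_order all_algebra.
From mathcomp Require Import all_classical all_reals all_analysis.
Set Implicit Arguments. Unset Strict Implicit. Unset Printing Implicit Defensive.
Import Order.TTheory GRing.Theory Num.Theory.
Import numFieldNormedType.Exports.
Local Open Scope classical_set_scope.
Local Open Scope ring_scope.

Section Defs.
Variable R : realType.

(* Euclidean norm on R^d (the library norm on matrices is the max norm) *)
Definition enorm (d : nat) (v : 'rV[R]_d) : R := Num.sqrt (\sum_i v 0 i ^+ 2).

Definition unitv (d : nat) (i : 'I_d) : 'rV[R]_d := delta_mx 0 i.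

Definition partial (d : nat) (f : 'rV[R]_d -> R) (i : 'I_d) (x : 'rV[R]_d) : R :=
  derive f x (unitv i).

Definition C2 (d : nat) (f : 'rV[R]_d -> R) : Prop :=
  [/\ continuous f,
      (forall i x, derivable f x (unitv i)),
      (forall i, continuous (partial f i)),
      (forall i j x, derivable (partial f i) x (unitv j)) &
      (forall i j, continuous (partial (partial f i) j))].

Definition grad (d : nat) (f : 'rV[R]_d -> R) (x : 'rV[R]_d) : 'rV[R]_d :=
  \row_i partial f i x.

(* spectral norm ||H|| = sup_{||s|| <= 1} ||H s|| (s as a column: (H s)^T = s H^T) *)
Definition specnorm (d : nat) (H : 'M[R]_d) : R :=
  sup [set enorm (s *m H^T) | s in [set s : 'rV[R]_d | enorm s <= 1]].

Definition quad_model (d : nat) (b0 : R) (G : 'rV[R]_d) (H : 'M[R]_d)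
    (x0 x : 'rV[R]_d) : R :=
  let s := x - x0 in b0 + \sum_i s 0 i * G 0 i + 2^-1 * (s *m H *m s^T) 0 0.

Definition kappa_eg1 (d : nat) (kLg kH : R) : R :=
  5 * Num.sqrt (2 * d%:R) / 2 * (kLg + kH).

Definition kappa_ef (d : nat) (kLg kH : R) : R :=
  kappa_eg1 d kLg kH + (kLg + kH) / 2.

End Defs.

From mathcomp Require Import all_boot all_order all_algebra.
From mathcomp Require Import all_classical all_reals all_analysis.
From mathcomp Require Import ring lra.
Set Implicit Arguments. Unset Strict Implicit. Unset Printing Implicit Defensive.
Import Order.TTheory GRing.Theory Num.Theory.
Import numFieldNormedType.Exports.
Local Open Scope classical_set_scope.
Local Open Scope ring_scope.

(* Write x = x0 + s with |s| <= Delta and walk from x0 to x along the axis path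
   x0 = p_0, p_1, ..., p_d = x, where p_{k+1} - p_k = s_k e^k.  Then
     M(x) - f(x) = (M(x0) - f(x0))
                   + sum_k (s_k G_k - (f(p_{k+1}) - f(p_k)))
                   + 1/2 sum_k H_kk s_k^2.
   The first term is E0.  By the mean value theorem each increment of f is
   s_k d_k f(xi_k) with xi_k on the k-th leg, while interpolation at
   x0 +- Delta e^k forces G_k = d_k f(eta_k) + (Ep_k - Em_k) / (2 Delta) with
   eta_k on the k-th axis segment; the points xi_k, eta_k are at most
   5/2 Delta apart, so the Lipschitz gradient bounds each linear-term error.
   Cauchy--Schwarz (sum |s_k| <= sqrt d |s|) and |H_kk| <= ||H|| finish. *)

Section EuclideanNorm.
Variables (R : realType) (d : nat).
Implicit Types (v : 'rV[R]_d) (r : R).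

Lemma sumsq_ge0 v : 0 <= \sum_i v 0 i ^+ 2.
Proof. by apply: sumr_ge0 => i _; exact: sqr_ge0. Qed.

Lemma enorm_le v r : 0 <= r -> \sum_i v 0 i ^+ 2 <= r ^+ 2 -> enorm v <= r.
Proof.
by move=> r0 h; rewrite /enorm -(ger0_norm r0) -sqrtr_sqr ler_sqrt // sqr_ge0.
Qed.

Lemma sumsq_le v r : enorm v <= r -> \sum_i v 0 i ^+ 2 <= r ^+ 2.
Proof.
move=> h; have r0 : 0 <= r by apply: le_trans h; exact: sqrtr_ge0.
by rewrite -(sqr_sqrtr (sumsq_ge0 v)) lerXn2r // nnegrE sqrtr_ge0.
Qed.

Lemma sqr_le_sumsq v k : v 0 k ^+ 2 <= \sum_i v 0 i ^+ 2.
Proof. by rewrite (bigD1 k) //= lerDl; apply: sumr_ge0 => i _; exact: sqr_ge0. Qed.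

Lemma coord_le_enorm v k : `|v 0 k| <= enorm v.
Proof. by rewrite -sqrtr_sqr ler_sqrt ?sumsq_ge0 ?sqr_le_sumsq. Qed.

(* Cauchy--Schwarz against the all-ones vector, via 2|a||b| <= a^2 + b^2. *)
Lemma sqr_sum_abs_le (a : 'I_d -> R) :
  (\sum_i `|a i|) ^+ 2 <= d%:R * \sum_i a i ^+ 2.
Proof.
have double_sum : \sum_(i < d) \sum_(j < d) (a i ^+ 2 + a j ^+ 2)
    = 2 * (d%:R * \sum_i a i ^+ 2).
  rewrite (eq_bigr (fun i => d%:R * a i ^+ 2 + \sum_j a j ^+ 2)); last first.
    by move=> i _; rewrite big_split /= sumr_const card_ord mulr_natl.
  rewrite big_split /= sumr_const card_ord -mulr_sumr mulr_natl; ring.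
suff : (\sum_i `|a i|) ^+ 2 * 2 <= 2 * (d%:R * \sum_i a i ^+ 2).
  by rewrite mulrC ler_pM2l.
rewrite -double_sum expr2 !mulr_suml; apply: ler_sum => i _.
rewrite mulr_sumr mulr_suml; apply: ler_sum => j _; rewrite -subr_ge0.
have -> : a i ^+ 2 + a j ^+ 2 - `|a i| * `|a j| * 2 = (`|a i| - `|a j|) ^+ 2.
  by rewrite sqrrB -(real_normK (num_real (a i))) -(real_normK (num_real (a j))); ring.
exact: sqr_ge0.
Qed.

Lemma sum_abs_le_enorm v : \sum_i `|v 0 i| <= Num.sqrt d%:R * enorm v.
Proof.
have l1_ge0 : 0 <= \sum_i `|v 0 i| by apply: sumr_ge0 => i _; exact: normr_ge0.
rewrite -(ger0_norm l1_ge0) -sqrtr_sqr /enorm -sqrtrM // ler_sqrt.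
  exact: (sqr_sum_abs_le (fun i => v 0 i)).
by rewrite mulr_ge0 ?sumsq_ge0.
Qed.

End EuclideanNorm.

Section DirectionalMVT.
Variables (R : realType) (d : nat).

(* The difference quotient of [f] at [t *: e + y] along [e] is the difference
   quotient at [t] of the restriction of [f] to the line [s |-> s *: e + y]. *)
Lemma line_quotient_eq (f : 'rV[R]_d -> R) (e y : 'rV[R]_d) (t : R) :
  (fun h : R => h^-1 *: (((fun s : R => f (s *: e + y)) \o shift t) (h *: 1)
                         - f (t *: e + y)))
  = (fun h => h^-1 *: ((f \o shift (t *: e + y)) (h *: e) - f (t *: e + y))).
Proof.
apply/funext => h /=; congr (_ *: (f _ - _)).
by rewrite /shift /= scalerDl addrA [h *: 1]mulr1.
Qed.

Lemma is_derive_line (f : 'rV[R]_d -> R) (e y : 'rV[R]_d) (t : R) :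
  derivable f (t *: e + y) e ->
  is_derive t 1 (fun s : R => f (s *: e + y)) (derive f (t *: e + y) e).
Proof. by move=> fe; split; rewrite ?/derivable /derive line_quotient_eq. Qed.

Lemma mvt_dir (f : 'rV[R]_d -> R) (e y : 'rV[R]_d) (a : R) :
  (forall x, derivable f x e) ->
  exists c, (0 <= c <= a \/ a <= c <= 0) /\
            f (a *: e + y) - f y = a * derive f (c *: e + y) e.
Proof.
move=> fe; set g := fun s : R => f (s *: e + y).
have dg t : is_derive t (1 : R) g (derive f (t *: e + y) e).
  exact: is_derive_line.
have cg a0 b0 : {within `[a0, b0], continuous g}.
  by apply: derivable_within_continuous => t _; have [] := dg t.
have g0 : g 0 = f y by rewrite /g scale0r add0r.
have [a_ge0|a_lt0] := lerP 0 a.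
  have [c + E] := MVT_segment a_ge0 (fun t _ => dg t) (cg 0 a).
  rewrite in_itv /= => ca; exists c; split; first by left.
  by rewrite -g0 E subr0 mulrC.
have [c + E] := MVT_segment (ltW a_lt0) (fun t _ => dg t) (cg a 0).
rewrite in_itv /= => ca; exists c; split; first by right.
by rewrite -g0; apply: oppr_inj; rewrite opprB E; ring.
Qed.

End DirectionalMVT.

Section DiagonalModel.
Variables (R : realType) (d : nat).
Implicit Types (H : 'M[R]_d) (s : 'rV[R]_d).

Lemma scale_unitv_entry (a : R) (k i : 'I_d) :
  (a *: unitv R k) 0 i = a * (i == k)%:R.
Proof. by rewrite !mxE eqxx. Qed.

Lemma quad_model_diag b0 G H x0 x : is_diag_mx H ->
  quad_model b0 G H x0 x = b0 + \sum_i (x - x0) 0 i * G 0 i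
     + 2^-1 * \sum_i H i i * (x - x0) 0 i ^+ 2.
Proof.
move/is_diag_mxP => Hdiag; rewrite /quad_model; congr (_ + _ * _).
rewrite !mxE; apply: eq_bigr => j _; rewrite !mxE.
rewrite (bigD1 j) //= big1 ?addr0; first by rewrite !mxE expr2; ring.
by move=> k kj; rewrite Hdiag ?mulr0.
Qed.

Lemma quad_model_axis b0 G H x0 a k : is_diag_mx H ->
  quad_model b0 G H x0 (x0 + a *: unitv R k)
  = b0 + a * G 0 k + 2^-1 * (H k k * a ^+ 2).
Proof.
move=> Hdiag; rewrite quad_model_diag // [x0 + _]addrC addrK.
rewrite (bigD1 k) //= big1 => [|i ik]; last first.
  by rewrite scale_unitv_entry (negbTE ik) mulr0 mul0r.
rewrite [X in 2^-1 * X](bigD1 k) //= big1 => [|i ik]; last first.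
  by rewrite scale_unitv_entry (negbTE ik) mulr0 expr0n mulr0.
by rewrite !scale_unitv_entry eqxx mulr1 !addr0.
Qed.

Lemma diag_row_mul_entry H s j : is_diag_mx H -> (s *m H^T) 0 j = s 0 j * H j j.
Proof.
move/is_diag_mxP => Hdiag; rewrite !mxE (bigD1 j) //= big1 ?addr0 ?mxE //.
by move=> k kj; rewrite mxE Hdiag ?mulr0 // eq_sym.
Qed.

(* For a diagonal matrix the set whose supremum defines [specnorm] is bounded
   (by the Frobenius norm), so [sup] behaves as expected. *)
Lemma specnorm_set_bounded H : is_diag_mx H ->
  has_ubound [set enorm (s *m H^T) | s in [set s : 'rV[R]_d | enorm s <= 1]].
Proof.
move=> Hdiag; exists (Num.sqrt (\sum_j H j j ^+ 2)) => _ [s /= s_le1 <-].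
rewrite /enorm ler_sqrt; last by apply: sumr_ge0 => j _; exact: sqr_ge0.
apply: ler_sum => j _; rewrite diag_row_mul_entry // exprMn ler_piMl ?sqr_ge0 //.
by apply: le_trans (sqr_le_sumsq _ j) _; rewrite -(expr1n _ 2) sumsq_le.
Qed.

Lemma specnorm_ge0 H : is_diag_mx H -> 0 <= specnorm H.
Proof.
have enorm0 : enorm (0 : 'rV[R]_d) = 0.
  by rewrite /enorm big1 ?sqrtr0 // => i _; rewrite mxE expr0n.
move=> Hdiag; apply: (ub_le_sup (specnorm_set_bounded Hdiag)).
by exists 0; rewrite /= ?mul0mx enorm0.
Qed.

(* Each diagonal entry is bounded by the spectral norm (test with [e^i]). *)
Lemma diag_le_specnorm H i : is_diag_mx H -> `|H i i| <= specnorm H.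
Proof.
move=> Hdiag; apply: (ub_le_sup (specnorm_set_bounded Hdiag)); exists (unitv R i).
  rewrite /= /enorm (bigD1 i) //= big1 ?addr0 => [|j ji].
    by rewrite !mxE !eqxx expr1n sqrtr1.
  by rewrite !mxE (negbTE ji) andbF expr0n.
rewrite /enorm (bigD1 i) //= big1 ?addr0 => [|j ji].
  by rewrite diag_row_mul_entry // !mxE !eqxx mul1r sqrtr_sqr.
by rewrite diag_row_mul_entry // !mxE (negbTE ji) andbF mul0r expr0n.
Qed.

Lemma weighted_sumsq_le (w : 'I_d -> R) (kH Delta : R) s :
  0 <= kH -> (forall i, `|w i| <= kH) -> enorm s <= Delta ->
  `|\sum_i w i * s 0 i ^+ 2| <= kH * Delta ^+ 2.
Proof.
move=> kH_ge0 w_le s_le; apply: le_trans (ler_norm_sum _ _ _) _.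
apply: (@le_trans _ _ (\sum_i kH * s 0 i ^+ 2)).
  apply: ler_sum => i _; rewrite normrM (ger0_norm (sqr_ge0 _)).
  by rewrite ler_wpM2r ?sqr_ge0.
by rewrite -mulr_sumr ler_wpM2l // sumsq_le.
Qed.

End DiagonalModel.

Section AxisPath.
Variables (R : realType) (d : nat).
Implicit Types (s x : 'rV[R]_d).

(* [axis_path s m] keeps the first [m] coordinates of [s]; the points
   [x + axis_path s m], m = 0..d, walk from [x] to [x + s] along the axes. *)
Definition axis_path s (m : nat) : 'rV[R]_d :=
  \row_i (if (i < m)%N then s 0 i else 0).

Lemma axis_path0 s : axis_path s 0 = 0.
Proof. by apply/rowP => i; rewrite !mxE. Qed.

Lemma axis_path_full s : axis_path s d = s.
Proof. by apply/rowP => i; rewrite !mxE ltn_ord. Qed.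

Lemma axis_path_step s x (k : 'I_d) :
  x + axis_path s k.+1 = s 0 k *: unitv R k + (x + axis_path s k).
Proof.
apply/rowP => i; rewrite !mxE /= ltnS leq_eqVlt.
have [->|ik] := eqVneq i k; first by rewrite eqxx ltnn mulr1 addr0 addrC.
have -> : (nat_of_ord i == k) = false by apply/negbTE.
by rewrite mulr0 add0r.
Qed.

Lemma telescope_axis_path (f : 'rV[R]_d -> R) s x :
  f (x + s) - f x
  = \sum_(k < d) (f (x + axis_path s k.+1) - f (x + axis_path s k)).
Proof.
pose F m := f (x + axis_path s m).
rewrite -(big_mkord xpredT (fun k => F k.+1 - F k)) telescope_sumr //.
by rewrite /F axis_path_full axis_path0 addr0.
Qed.

(* A point on the k-th leg of the path (for [s] in the ball of radius [Delta])
   is within [5/2 Delta] of any point of the k-th axis segment of that ball: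
   the squared distance is at most [Delta^2 + (2 Delta)^2]. *)
Lemma axis_path_dist s x (k : 'I_d) (c t Delta : R) :
  enorm s <= Delta -> `|c| <= Delta -> `|t| <= Delta ->
  enorm (c *: unitv R k + (x + axis_path s k) - (x + t *: unitv R k))
  <= 5 / 2 * Delta.
Proof.
move=> s_le; rewrite !ler_norml => /andP[c1 c2] /andP[t1 t2].
have Delta_ge0 : 0 <= Delta by lra.
apply: enorm_le; first lra.
apply: (@le_trans _ _ (\sum_i (s 0 i ^+ 2 + (i == k)%:R * (c - t) ^+ 2))).
  apply: ler_sum => i _; rewrite !mxE.
  have [->|ik] := eqVneq i k.
    rewrite eqxx ltnn /= !mulr1 mul1r addr0.
    have -> : c + x 0 k - (x 0 k + t) = c - t by ring.
    by rewrite lerDr sqr_ge0.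
  rewrite andbF /= mul0r addr0.
  set v := (if _ then _ else _).
  have -> : c * 0 + (x 0 i + v) - (x 0 i + t * 0) = v by ring.
  by rewrite /v; case: ifP => _; rewrite ?expr0n ?sqr_ge0.
rewrite big_split /= [X in _ + X](bigD1 k) //= [X in _ + (_ + X)]big1 => [|i /negbTE->]; last first.
  by rewrite mul0r.
rewrite eqxx mul1r addr0.
have := sumsq_le s_le; nra.
Qed.

End AxisPath.

Section InterpolationError.
Variables (R : realType) (d : nat) (f : 'rV[R]_d -> R).
Hypothesis f_derivable : forall i x, derivable f x (unitv R i).

Lemma partial_lipschitz (L : R) i y z :
  (forall x y, enorm (grad f x - grad f y) <= L * enorm (x - y)) ->
  `|partial f i y - partial f i z| <= L * enorm (y - z).
Proof.
move=> Lip; apply: le_trans (Lip y z).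
by have := coord_le_enorm (grad f y - grad f z) i; rewrite !mxE.
Qed.

Lemma model_error_decomposition b0 G H x0 s : is_diag_mx H ->
  quad_model b0 G H x0 (x0 + s) - f (x0 + s)
  = (quad_model b0 G H x0 x0 - f x0)
    + \sum_(k < d) (s 0 k * G 0 k
                    - (f (x0 + axis_path s k.+1) - f (x0 + axis_path s k)))
    + 2^-1 * \sum_i H i i * s 0 i ^+ 2.
Proof.
move=> Hdiag.
have model_at_x0 : quad_model b0 G H x0 x0 = b0.
  rewrite quad_model_diag // !big1 ?mulr0 ?addr0 // => i _;
  by rewrite !mxE subrr ?mul0r ?expr0n ?mulr0.
rewrite model_at_x0 quad_model_diag // [x0 + s]addrC addrK.
by rewrite sumrB -telescope_axis_path [s + x0]addrC; ring.
Qed.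

(* Interpolating at [x0 +- Delta e^k] makes [G_k] a central difference of [f],
   hence (mean value theorem) a partial derivative of [f] at a point of the
   k-th axis segment, up to the interpolation errors. *)
Lemma central_difference b0 G H x0 (Delta ep em : R) (k : 'I_d) :
  0 < Delta -> is_diag_mx H ->
  quad_model b0 G H x0 (x0 + Delta *: unitv R k)
    = f (x0 + Delta *: unitv R k) + ep ->
  quad_model b0 G H x0 (x0 - Delta *: unitv R k)
    = f (x0 - Delta *: unitv R k) + em ->
  exists2 t, `|t| <= Delta &
    G 0 k = partial f k (x0 + t *: unitv R k) + (ep - em) / (2 * Delta).
Proof.
move=> Delta_gt0 Hdiag; rewrite quad_model_axis // -scaleNr quad_model_axis //.
rewrite sqrrN scaleNr => Mp Mm.
have [c [c_in fdiff]] := mvt_dir (x0 - Delta *: unitv R k) (2 * Delta) (@f_derivable k).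
have right_end : 2 * Delta *: unitv R k + (x0 - Delta *: unitv R k)
    = x0 + Delta *: unitv R k by apply/rowP => i; rewrite !mxE; ring.
have on_axis : c *: unitv R k + (x0 - Delta *: unitv R k)
    = x0 + (c - Delta) *: unitv R k by apply/rowP => i; rewrite !mxE; ring.
rewrite right_end on_axis in fdiff.
exists (c - Delta); first by rewrite ler_norml; case: c_in => /andP[]; lra.
apply: (mulfI (_ : 2 * Delta != 0)); first by rewrite mulf_neq0 // gt_eqF.
rewrite mulrDr mulrCA divff ?mulf_neq0 ?gt_eqF // mulr1 /partial -fdiff; lra.
Qed.

(* Error committed on the k-th leg of the axis path by the linear term [s_k G_k]:
   [G_k] and the mean-value slope of the leg are partial derivatives at points
   at most [5/2 Delta] apart, plus the central-difference noise. *)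
Lemma coordinate_error_le (L Delta t Gk ep em : R) x0 s (k : 'I_d) :
  (forall x y, enorm (grad f x - grad f y) <= L * enorm (x - y)) ->
  0 <= L -> 0 < Delta -> enorm s <= Delta -> `|t| <= Delta ->
  Gk = partial f k (x0 + t *: unitv R k) + (ep - em) / (2 * Delta) ->
  `|s 0 k * Gk - (f (x0 + axis_path s k.+1) - f (x0 + axis_path s k))|
    <= `|s 0 k| * (L * (5 / 2 * Delta)) + 2^-1 * `|ep - em|.
Proof.
move=> Lip L_ge0 Delta_gt0 s_le t_le ->.
have sk_le : `|s 0 k| <= Delta := le_trans (coord_le_enorm s k) s_le.
have [c [c_in fstep]] := mvt_dir (x0 + axis_path s k) (s 0 k) (@f_derivable k).
rewrite -axis_path_step in fstep; rewrite fstep.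
set xi := c *: unitv R k + (x0 + axis_path s k).
set eta := x0 + t *: unitv R k.
have c_le : `|c| <= Delta.
  by move: sk_le; rewrite !ler_norml; case: c_in => /andP[]; lra.
have -> : s 0 k * (partial f k eta + (ep - em) / (2 * Delta)) - s 0 k * derive f xi (unitv R k)
    = s 0 k * ((ep - em) / (2 * Delta)) - s 0 k * (partial f k xi - partial f k eta).
  by rewrite /partial; ring.
apply: le_trans (ler_normB _ _) _; rewrite addrC !normrM; apply: lerD.
  apply: ler_wpM2l; first exact: normr_ge0.
  apply: le_trans (partial_lipschitz _ _ _ Lip) _.
  by apply: ler_wpM2l; last exact: axis_path_dist.
have two_Delta_ge0 : 0 <= 2 * Delta by rewrite mulr_ge0 ?ltW.
rewrite normfV (ger0_norm two_Delta_ge0).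
have -> : `|s 0 k| * (`|ep - em| * (2 * Delta)^-1)
    = `|s 0 k| / Delta * (2^-1 * `|ep - em|) by field; rewrite gt_eqF.
by apply: ler_piMl; rewrite ?mulr_ge0 ?invr_ge0 // ler_pdivrMr // mul1r.
Qed.

Lemma linear_term_error_le b0 G H x0 s (L Delta : R) (Ep Em : 'I_d -> R) :
  (forall x y, enorm (grad f x - grad f y) <= L * enorm (x - y)) ->
  0 <= L -> 0 < Delta -> is_diag_mx H -> enorm s <= Delta ->
  (forall k, quad_model b0 G H x0 (x0 + Delta *: unitv R k)
             = f (x0 + Delta *: unitv R k) + Ep k) ->
  (forall k, quad_model b0 G H x0 (x0 - Delta *: unitv R k)
             = f (x0 - Delta *: unitv R k) + Em k) ->
  `|\sum_(k < d) (s 0 k * G 0 k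
                  - (f (x0 + axis_path s k.+1) - f (x0 + axis_path s k)))|
    <= L * (5 / 2 * Delta) * (Num.sqrt d%:R * Delta)
       + 2^-1 * \sum_(k < d) `|Ep k - Em k|.
Proof.
move=> Lip L_ge0 Delta_gt0 Hdiag s_le Ep_def Em_def.
apply: le_trans (ler_norm_sum _ _ _) _.
apply: le_trans; first apply: ler_sum => k _.
  have [t t_le Gk] := central_difference Delta_gt0 Hdiag (Ep_def k) (Em_def k).
  exact: coordinate_error_le Lip L_ge0 Delta_gt0 s_le t_le Gk.
have C_ge0 : 0 <= L * (5 / 2 * Delta) by apply: mulr_ge0; lra.
rewrite big_split /= -mulr_suml -mulr_sumr lerD2r mulrC ler_wpM2l //.
by apply: le_trans (sum_abs_le_enorm s) _; rewrite ler_wpM2l ?sqrtr_ge0.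
Qed.

End InterpolationError.

(* The constant [kappa_ef] absorbs the first-order error [5/2 sqrt(d) kLg Delta^2]
   (with room to spare: it carries an extra factor [sqrt 2] and the [kH] terms)
   and the curvature error [kH Delta^2 / 2]. *)
Lemma kappa_ef_dominates (R : realType) (d : nat) (L kH Delta : R) :
  0 <= L -> 0 <= kH ->
  L * (5 / 2 * Delta) * (Num.sqrt d%:R * Delta) + 2^-1 * (kH * Delta ^+ 2)
  <= kappa_ef d L kH * Delta ^+ 2.
Proof.
move=> L_ge0 kH_ge0; rewrite /kappa_ef /kappa_eg1 sqrtrM ?ler0n //.
have sqrt2_ge1 : 1 <= Num.sqrt (2 : R) by rewrite -{1}sqrtr1 ler_sqrt ?ler1n.
have sqrtd_ge0 : 0 <= Num.sqrt (d%:R : R) := sqrtr_ge0 _.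
set r := Num.sqrt 2 in sqrt2_ge1 *; set q := Num.sqrt d%:R in sqrtd_ge0 *.
have -> : L * (5 / 2 * Delta) * (q * Delta) + 2^-1 * (kH * Delta ^+ 2)
    = 5 / 2 * (q * L * Delta ^+ 2) + 2^-1 * (kH * Delta ^+ 2) by ring.
have D2_ge0 : 0 <= Delta ^+ 2 := sqr_ge0 Delta.
set D2 := Delta ^+ 2 in D2_ge0 *; clearbody D2.
have : 0 <= (r - 1) * (q * L * D2) by rewrite !mulr_ge0 ?subr_ge0.
have : 0 <= r * q * kH * D2 by rewrite !mulr_ge0 // (le_trans ler01 sqrt2_ge1).
have : 0 <= L * D2 by rewrite mulr_ge0.
nra.
Qed.

Unset Implicit Arguments.
Theorem mainTheorem3 (R : realType) (d : nat) (f : 'rV[R]_d -> R)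
    (kLg kH Delta : R) (x0 : 'rV[R]_d) (E0 : R) (Ep Em : 'I_d -> R)
    (b0 : R) (G : 'rV[R]_d) (H : 'M[R]_d) :
  C2 f ->
  0 < kLg ->
  (forall x y : 'rV[R]_d, enorm (grad f x - grad f y) <= kLg * enorm (x - y)) ->
  0 < Delta ->
  is_diag_mx H ->
  quad_model b0 G H x0 x0 = f x0 + E0 ->
  (forall i, quad_model b0 G H x0 (x0 + Delta *: unitv R i)
             = f (x0 + Delta *: unitv R i) + Ep i) ->
  (forall i, quad_model b0 G H x0 (x0 - Delta *: unitv R i)
             = f (x0 - Delta *: unitv R i) + Em i) ->
  specnorm H <= kH ->
  forall x : 'rV[R]_d, enorm (x - x0) <= Delta ->
    `|quad_model b0 G H x0 x - f x|
      <= kappa_ef d kLg kH * Delta ^+ 2 + `|E0|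
         + \sum_(i < d) (`|Ep i - E0| + `|Em i - E0|).
Proof.
move=> [_ f_derivable _ _ _] kLg_gt0 Lip Delta_gt0 Hdiag E0_def Ep_def Em_def
  H_le x x_in.
have kH_ge0 : 0 <= kH := le_trans (specnorm_ge0 Hdiag) H_le.
set s := x - x0 in x_in *; have -> : x = x0 + s by rewrite /s addrC subrK.
rewrite model_error_decomposition // E0_def [f x0 + E0]addrC addrK.
set S := \sum_(i < d) (`|Ep i - E0| + `|Em i - E0|).
have noise_le : \sum_(k < d) `|Ep k - Em k| <= S.
  by apply: ler_sum => k _; rewrite (distrC (Em k)) ler_distD.
have S_ge0 : 0 <= S by apply: sumr_ge0 => i _; rewrite addr_ge0 ?normr_ge0.
have first_order := linear_term_error_le f_derivable Lip (ltW kLg_gt0)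
  Delta_gt0 Hdiag x_in Ep_def Em_def.
set A := \sum_(k < d) (s 0 k * G 0 k - _) in first_order *.
have curvature := weighted_sumsq_le kH_ge0
  (fun i => le_trans (diag_le_specnorm i Hdiag) H_le) x_in.
apply: le_trans (ler_normD _ _) _; rewrite normrM ger0_norm ?invr_ge0 //.
have := ler_normD E0 A; have := kappa_ef_dominates d Delta (ltW kLg_gt0) kH_ge0.
lra.
Qed.
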